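(* Let $\mu_e>0,\sigma^2>0$ and consider $N$ players, player $i$ having $n_i>0$ samples, federating with optimal fine-grained federation. Then the error of player $j$ is $$\frac{\mu_e/n_j}{V_j\cdot T}\left(1+\sigma^2\left(T-\frac{1}{V_j}\right)\right),$$ where $V_i=\sigma^2+\frac{\mu_e}{n_i}$ and $T=\sum_{i=1}^N\frac{1}{V_i}$.
   Context: In the mean-estimation model, $\mu_e$ is the average sampling noise and $\sigma^2$ the variance of players' true means. In fine-grained federation, player $j$ uses the weighted combination $\sum_i v_{ji}\hat\theta_i$ of all players' local estimates with real weights satisfying $\sum_{i=1}^N v_{ji}=1$; with weights $v_{j\cdot}$ its expected squared error is $$\mu_e\sum_{i=1}^N\frac{v_{ji}^2}{n_i}+\sigma^2\left(\sum_{i\neq j}v_{ji}^2+\Big(\sum_{i\neq j}v_{ji}\Big)^2\right).$$ Optimal fine-grained federation uses the weights minimizing this expression, and the player's error is this minimum value. *)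

From HB Require Import structures.
From mathcomp Require Import all_boot all_order all_algebra.
Set Implicit Arguments. Unset Strict Implicit. Unset Printing Implicit Defensive.
Import Order.TTheory GRing.Theory Num.Theory.
Local Open Scope ring_scope.

Definition fg_error (R : realFieldType) (N : nat) (mu_e sigma2 : R)
  (n : 'I_N -> nat) (j : 'I_N) (v : 'I_N -> R) : R :=
  mu_e * (\sum_(i < N) v i ^+ 2 / (n i)%:R)
  + sigma2 * (\sum_(i < N | i != j) v i ^+ 2
              + (\sum_(i < N | i != j) v i) ^+ 2).

Definition fg_weights (R : realFieldType) (N : nat) (v : 'I_N -> R) : Prop :=
  \sum_(i < N) v i = 1.

Definition optimal_fg_error (R : realFieldType) (N : nat) (mu_e sigma2 : R)
  (n : 'I_N -> nat) (j : 'I_N) (e : R) : Prop :=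
  (exists v : 'I_N -> R, fg_weights v /\ fg_error mu_e sigma2 n j v = e)
  /\ (forall v : 'I_N -> R, fg_weights v -> e <= fg_error mu_e sigma2 n j v).

Definition Vi (R : realFieldType) (N : nat) (mu_e sigma2 : R)
  (n : 'I_N -> nat) (i : 'I_N) : R := sigma2 + mu_e / (n i)%:R.

Definition Tsum (R : realFieldType) (N : nat) (mu_e sigma2 : R)
  (n : 'I_N -> nat) : R := \sum_(i < N) 1 / Vi mu_e sigma2 n i.

From HB Require Import structures.
From mathcomp Require Import all_boot all_order all_algebra.
From mathcomp Require Import ring.
Set Implicit Arguments. Unset Strict Implicit. Unset Printing Implicit Defensive.
Import Order.TTheory GRing.Theory Num.Theory.
Local Open Scope ring_scope.

(* For weights summing to 1 the error is the quadratic form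
   Q(v) = sum_i V_i v_i^2 - 2 sigma2 v_j + sigma2.  A Lagrange point w, with
   V_i w_i = c + sigma2 [i = j] and sum_i w_i = 1, satisfies
   Q(v) = Q(w) + sum_i V_i (v_i - w_i)^2, so it is the minimiser since V_i > 0.
   Here c = (1 - sigma2 / V_j) / T, and the minimum
   Q(w) = (c + sigma2) (1 - sigma2 / V_j) is the claimed formula. *)

Section WeightedQuadratic.

Variables (R : comPzRingType) (N : nat) (V b : 'I_N -> R).

Definition wquad (v : 'I_N -> R) : R :=
  \sum_(i < N) V i * v i ^+ 2 - (\sum_(i < N) b i * v i) *+ 2.

Variables (c : R) (w : 'I_N -> R).
Hypothesis stationary_w : forall i, V i * w i = c + b i.

Lemma sum_mul_stationary (f : 'I_N -> R) :
  \sum_(i < N) f i * (V i * w i) = c * \sum_(i < N) f i + \sum_(i < N) b i * f i.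
Proof.
under eq_bigr do rewrite stationary_w mulrDr.
by rewrite big_split /= mulr_sumr; congr (_ + _); apply: eq_bigr => i _; ring.
Qed.

Lemma wquad_stationary : wquad w = c * \sum_(i < N) w i - \sum_(i < N) b i * w i.
Proof.
rewrite /wquad (eq_bigr (fun i => w i * (V i * w i))) => [|i _]; last by ring.
by rewrite sum_mul_stationary; ring.
Qed.

Lemma wquad_decomp (v : 'I_N -> R) : \sum_(i < N) v i = \sum_(i < N) w i ->
  wquad v = wquad w + \sum_(i < N) V i * (v i - w i) ^+ 2.
Proof.
move=> sum_vw.
have -> : \sum_(i < N) V i * (v i - w i) ^+ 2 = \sum_(i < N) V i * v i ^+ 2
    - (\sum_(i < N) v i * (V i * w i)) *+ 2 + \sum_(i < N) w i * (V i * w i).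
  by rewrite -sumrMnl -sumrB -big_split /=; apply: eq_bigr => i _; ring.
by rewrite wquad_stationary /wquad !sum_mul_stationary sum_vw; ring.
Qed.

End WeightedQuadratic.

Lemma wquad_stationary_le (R : realDomainType) (N : nat) (V b w v : 'I_N -> R) (c : R) :
  (forall i, 0 <= V i) -> (forall i, V i * w i = c + b i) ->
  \sum_(i < N) v i = \sum_(i < N) w i -> wquad V b w <= wquad V b v.
Proof.
move=> V_ge0 stationary_w sum_vw; rewrite (wquad_decomp stationary_w sum_vw) lerDl.
by apply: sumr_ge0 => i _; rewrite mulr_ge0 ?V_ge0 ?sqr_ge0.
Qed.

Section LagrangeWeights.

Variables (F : fieldType) (N : nat) (V b : 'I_N -> F).

Definition lagrange_mult : F := (1 - \sum_(i < N) b i / V i) / \sum_(i < N) 1 / V i.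

Definition lagrange_weights (i : 'I_N) : F := (lagrange_mult + b i) / V i.

Lemma mul_lagrange_weights i : V i != 0 -> V i * lagrange_weights i = lagrange_mult + b i.
Proof. by move=> Vi_neq0; rewrite /lagrange_weights mulrC divfK. Qed.

Lemma sum_lagrange_weights : \sum_(i < N) 1 / V i != 0 ->
  \sum_(i < N) lagrange_weights i = 1.
Proof.
move=> T_neq0; rewrite /lagrange_weights.
have split_weight i : (lagrange_mult + b i) / V i
    = lagrange_mult * (1 / V i) + b i / V i by rewrite mulrDl mul1r.
by rewrite (eq_bigr _ (fun i _ => split_weight i)) big_split /= -mulr_sumr
  /lagrange_mult divfK // subrK.
Qed.

End LagrangeWeights.

Lemma sum_mulrn_eq (R : pzSemiRingType) (N : nat) (j : 'I_N) (x : R) (f : 'I_N -> R) :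
  \sum_(i < N) (x *+ (i == j)) * f i = x * f j.
Proof. by under eq_bigr do rewrite mulrnAl mulrb; rewrite -big_mkcond big_pred1_eq. Qed.

Lemma wquad_lagrange_le (R : realFieldType) (N : nat) (V b v : 'I_N -> R) :
  (forall i, 0 < V i) -> \sum_(i < N) 1 / V i != 0 -> \sum_(i < N) v i = 1 ->
  wquad V b (lagrange_weights V b) <= wquad V b v.
Proof.
move=> V_gt0 T_neq0 sum_v.
apply: (@wquad_stationary_le _ _ _ _ _ _ (lagrange_mult V b)) => [i|i|].
- exact: ltW.
- by rewrite mul_lagrange_weights // gt_eqF.
- by rewrite sum_v sum_lagrange_weights.
Qed.

Lemma fg_error_wquad (R : realFieldType) (N : nat) (mu_e sigma2 : R)
    (n : 'I_N -> nat) (j : 'I_N) (v : 'I_N -> R) : fg_weights v ->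
  fg_error mu_e sigma2 n j v
  = wquad (Vi mu_e sigma2 n) (fun i => sigma2 *+ (i == j)) v + sigma2.
Proof.
rewrite /fg_weights /fg_error /wquad sum_mulrn_eq => sum_v.
have -> : \sum_(i < N | i != j) v i = 1 - v j.
  by rewrite -sum_v [in RHS](bigD1 j) //=; ring.
have -> : \sum_(i < N | i != j) v i ^+ 2 = \sum_(i < N) v i ^+ 2 - v j ^+ 2.
  by rewrite [in RHS](bigD1 j) //=; ring.
have -> : \sum_(i < N) Vi mu_e sigma2 n i * v i ^+ 2
    = mu_e * (\sum_(i < N) v i ^+ 2 / (n i)%:R) + sigma2 * \sum_(i < N) v i ^+ 2.
  by rewrite !mulr_sumr -big_split; apply: eq_bigr => i _; rewrite /Vi /=; ring.
ring.
Qed.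

Theorem lemmaA1 (R : realFieldType) (N : nat) (mu_e sigma2 : R)
  (n : 'I_N -> nat) (j : 'I_N) :
  0 < mu_e -> 0 < sigma2 -> (forall i : 'I_N, (0 < n i)%N) ->
  optimal_fg_error mu_e sigma2 n j
    ((mu_e / (n j)%:R) / (Vi mu_e sigma2 n j * Tsum mu_e sigma2 n)
     * (1 + sigma2 * (Tsum mu_e sigma2 n - 1 / Vi mu_e sigma2 n j))).
Proof.
move=> mu_gt0 sigma_gt0 n_gt0.
set V := Vi mu_e sigma2 n; set b := fun i : 'I_N => sigma2 *+ (i == j).
have V_gt0 i : 0 < V i by rewrite addr_gt0 // divr_gt0 // ltr0n.
have T_gt0 : 0 < \sum_(i < N) 1 / V i.
  rewrite (bigD1 j) //= ltr_pwDl ?divr_gt0 // sumr_ge0 // => i _.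
  by rewrite divr_ge0 ?ltW.
have sum_w := sum_lagrange_weights b (lt0r_neq0 T_gt0).
have err_w : fg_error mu_e sigma2 n j (lagrange_weights V b)
    = (mu_e / (n j)%:R) / (V j * Tsum mu_e sigma2 n)
      * (1 + sigma2 * (Tsum mu_e sigma2 n - 1 / V j)).
  have stationary_w i := mul_lagrange_weights b (lt0r_neq0 (V_gt0 i)).
  rewrite fg_error_wquad // (wquad_stationary stationary_w) sum_w sum_mulrn_eq.
  rewrite /lagrange_weights /lagrange_mult sum_mulrn_eq /b eqxx mulr1n.
  have -> : mu_e / (n j)%:R = V j - sigma2 by rewrite /V /Vi; ring.
  by rewrite /Tsum -/V; field; rewrite !gt_eqF.
split; first by exists (lagrange_weights V b).
move=> v sum_v; rewrite -err_w !fg_error_wquad // lerD2r.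
exact: wquad_lagrange_le V_gt0 (lt0r_neq0 T_gt0) sum_v.
Qed.
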